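(* Let $(A,\succ,\prec)$ be an anti-pre-Novikov algebra and $s=\sum_i a_i\otimes b_i\in A\otimes A$. For $\zeta,\eta\in A^*$: (a) $P(s):=s_{12}\circ s_{13}+s_{23}\odot s_{13}+s_{12}\prec s_{23}=0$ iff $T_{\tau(s)}(\zeta)\circ T_{\tau(s)}(\eta)=T_{\tau(s)}(L_{\odot}^*(T_s(\zeta))\eta+R_{\prec}^*(T_{\tau(s)}(\eta))\zeta)$ for all $\zeta,\eta$; (b) $P_1(s):=s_{12}\prec s_{13}-s_{13}\odot s_{23}+s_{12}\circ s_{23}=0$ iff $T_{\tau(s)}(\zeta)\prec T_{\tau(s)}(\eta)=T_{\tau(s)}(R_{\circ}^*(T_{\tau(s)}(\eta))\zeta-R_{\odot}^*(T_s(\zeta))\eta)$ for all $\zeta,\eta$; (c) $P_2(s):=s_{12}\succ s_{13}+s_{13}\star s_{23}-s_{12}\succ s_{23}=0$ iff $T_{\tau(s)}(\zeta)\succ T_{\tau(s)}(\eta)=T_{\tau(s)}(L_{\star}^*(T_s(\zeta))\eta-R_{\succ}^*(T_{\tau(s)}(\eta))\zeta)$ for all $\zeta,\eta$; (d) $P_3(s):=s_{13}\circ s_{23}-s_{13}\prec s_{12}-s_{12}\odot s_{23}=0$ iff $T_s(\zeta)\circ T_s(\eta)=T_s(-L_{\odot}^*(T_s(\zeta))\eta-R_{\prec}^*(T_{\tau(s)}(\eta))\zeta)$ for all $\zeta,\eta$; (e) $P_4(s):=s_{13}\circ s_{12}-s_{13}\prec s_{23}-s_{23}\odot s_{12}=0$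 iff $T_s(\zeta)\prec T_s(\eta)=T_s(R_{\odot}^*(T_s(\zeta))\eta-R_{\circ}^*(T_{\tau(s)}(\eta))\zeta)$ for all $\zeta,\eta$; (f) $P_5(s):=s_{12}\star s_{23}-s_{13}\succ s_{12}-s_{13}\succ s_{23}=0$ iff $T_s(\zeta)\succ T_s(\eta)=T_s(R_{\succ}^*(T_{\tau(s)}(\eta))\zeta-L_{\star}^*(T_s(\zeta))\eta)$ for all $\zeta,\eta$.
   Context: $A$ is finite-dimensional over a field $k$. An anti-pre-Novikov algebra is $(A,\succ,\prec)$ such that with $x\circ y=x\succ y+x\prec y$: $(x\circ y-y\circ x)\succ z=y\succ(x\succ z)-x\succ(y\succ z)$; $x\prec(y\circ z)=(y\succ x)\prec z-(x\prec y)\prec z-y\succ(x\prec z)$; $(x\circ y)\succ z=-(x\succ z)\prec y$; $(x\prec y)\prec z=(x\prec z)\prec y$; $(x\circ y-y\circ x)\prec z=x\succ(y\circ z)-y\succ(x\circ z)$. Further $x\odot y=x\succ y+y\prec x$, $x\star y=x\circ y+y\circ x$. For an operation $\ast$, $L_\ast(x)y=x\ast y$, $R_\ast(x)y=y\ast x$; $L_{\star}=L_{\circ}+R_{\circ}$, $L_{\odot}=L_{\succ}+R_{\prec}$, $R_{\odot}=R_{\succ}+L_{\prec}$. For $f:A\to\mathrm{End}(A)$, $f^*(x)\in\mathrm{End}(A^* )$ is given by $\langle f^*(x)\zeta,y\rangle=-\langle\zeta,f(x)y\rangle$. $\tau(x\otimes y)=y\otimes x$. $T_s:A^*\to A$ is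 defined by $\langle T_s(\zeta),\eta\rangle=\langle s,\zeta\otimes\eta\rangle$. Tensor notation, for $s=\sum_i a_i\otimes b_i$ and an operation $\ast$ (sums over $i,j$): $s_{12}\ast s_{13}=\sum a_i\ast a_j\otimes b_i\otimes b_j$; $s_{13}\ast s_{12}=\sum a_i\ast a_j\otimes b_j\otimes b_i$; $s_{12}\ast s_{23}=\sum a_i\otimes b_i\ast a_j\otimes b_j$; $s_{13}\ast s_{23}=\sum a_i\otimes a_j\otimes b_i\ast b_j$; $s_{23}\ast s_{13}=\sum a_j\otimes a_i\otimes b_i\ast b_j$; $s_{23}\ast s_{12}=\sum a_j\otimes a_i\ast b_j\otimes b_i$. (General rule: $s_{pq}$ places $a_i$ in tensor slot $p$ and $b_i$ in slot $q$; the product is taken in the common slot, with the factor from the left term on the left.) *)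

From HB Require Import structures.
From mathcomp Require Import all_boot all_order all_algebra.
Set Implicit Arguments. Unset Strict Implicit. Unset Printing Implicit Defensive.
Import GRing.Theory.
Local Open Scope ring_scope.

(* A finite-dimensional vector space over a field K is modelled as K^n,
   written as row vectors 'rV[K]_n; its dual A^* is also 'rV[K]_n with the
   canonical pairing <zeta, y> = \sum_i zeta_i y_i. *)
Section Defs.
Variables (K : fieldType) (n : nat).
Local Notation A := 'rV[K]_n.

Definition pair (zeta y : A) : K := \sum_(i < n) zeta 0 i * y 0 i.

Definition bilinear_op (op : A -> A -> A) : Prop :=
  (forall (a : K) (x y z : A), op (a *: x + y) z = a *: op x z + op y z) /\
  (forall (a : K) (x y z : A), op x (a *: y + z) = a *: op x y + op x z).

Definition circ (sc pc : A -> A -> A) x y := sc x y + pc x y.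
Definition odot (sc pc : A -> A -> A) x y := sc x y + pc y x.
Definition star (sc pc : A -> A -> A) x y := circ sc pc x y + circ sc pc y x.

Record antiPreNovikov := APN {
  sc : A -> A -> A;
  pc : A -> A -> A;
  sc_bilin : bilinear_op sc;
  pc_bilin : bilinear_op pc;
  apn1 : forall x y z, sc (circ sc pc x y - circ sc pc y x) z
                       = sc y (sc x z) - sc x (sc y z);
  apn2 : forall x y z, pc x (circ sc pc y z)
                       = pc (sc y x) z - pc (pc x y) z - sc y (pc x z);
  apn3 : forall x y z, sc (circ sc pc x y) z = - pc (sc x z) y;
  apn4 : forall x y z, pc (pc x y) z = pc (pc x z) y;
  apn5 : forall x y z, pc (circ sc pc x y - circ sc pc y x) z
                       = sc x (circ sc pc y z) - sc y (circ sc pc x z)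
}.

(* f : A -> End(A) given as a curried map; f^*(x) acting on A^* defined by
   <f^*(x) zeta, y> = - <zeta, f(x) y>, i.e. coordinatewise on the basis *)
Definition dualop (f : A -> A -> A) (x : A) (zeta : A) : A :=
  \row_(j < n) - pair zeta (f x (delta_mx 0 j)).

Definition Lop (op : A -> A -> A) : A -> A -> A := fun x y => op x y.
Definition Rop (op : A -> A -> A) : A -> A -> A := fun x y => op y x.

(* tensors s = \sum_i a_i (x) b_i, represented by the list of pairs (a_i,b_i) *)
Definition tau (s : seq (A * A)) : seq (A * A) := [seq (p.2, p.1) | p <- s].

(* <T_s zeta, eta> = <s, zeta (x) eta>, so T_s zeta = \sum_i <zeta,a_i> b_i *)
Definition Tmap (s : seq (A * A)) (zeta : A) : A :=
  \sum_(p <- s) pair zeta p.1 *: p.2.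

(* Coordinates (i,j,k) of elements of A (x) A (x) A = K^n (x) K^n (x) K^n *)
Definition t3 (x y z : A) (i j k : 'I_n) : K := x 0 i * y 0 j * z 0 k.

Definition s12_s13 op (s : seq (A * A)) i j k : K :=
  \sum_(p <- s) \sum_(q <- s) t3 (op p.1 q.1) p.2 q.2 i j k.
Definition s13_s12 op (s : seq (A * A)) i j k : K :=
  \sum_(p <- s) \sum_(q <- s) t3 (op p.1 q.1) q.2 p.2 i j k.
Definition s12_s23 op (s : seq (A * A)) i j k : K :=
  \sum_(p <- s) \sum_(q <- s) t3 p.1 (op p.2 q.1) q.2 i j k.
Definition s13_s23 op (s : seq (A * A)) i j k : K :=
  \sum_(p <- s) \sum_(q <- s) t3 p.1 q.1 (op p.2 q.2) i j k.
Definition s23_s13 op (s : seq (A * A)) i j k : K :=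
  \sum_(p <- s) \sum_(q <- s) t3 q.1 p.1 (op p.2 q.2) i j k.
Definition s23_s12 op (s : seq (A * A)) i j k : K :=
  \sum_(p <- s) \sum_(q <- s) t3 q.1 (op p.1 q.2) p.2 i j k.

Definition P0 (N : antiPreNovikov) s i j k :=
  s12_s13 (circ (sc N) (pc N)) s i j k + s23_s13 (odot (sc N) (pc N)) s i j k
  + s12_s23 (pc N) s i j k.
Definition P1 (N : antiPreNovikov) s i j k :=
  s12_s13 (pc N) s i j k - s13_s23 (odot (sc N) (pc N)) s i j k
  + s12_s23 (circ (sc N) (pc N)) s i j k.
Definition P2 (N : antiPreNovikov) s i j k :=
  s12_s13 (sc N) s i j k + s13_s23 (star (sc N) (pc N)) s i j k
  - s12_s23 (sc N) s i j k.
Definition P3 (N : antiPreNovikov) s i j k :=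
  s13_s23 (circ (sc N) (pc N)) s i j k - s13_s12 (pc N) s i j k
  - s12_s23 (odot (sc N) (pc N)) s i j k.
Definition P4 (N : antiPreNovikov) s i j k :=
  s13_s12 (circ (sc N) (pc N)) s i j k - s13_s23 (pc N) s i j k
  - s23_s12 (odot (sc N) (pc N)) s i j k.
Definition P5 (N : antiPreNovikov) s i j k :=
  s12_s23 (star (sc N) (pc N)) s i j k - s13_s12 (sc N) s i j k
  - s13_s23 (sc N) s i j k.

Definition tensor_zero (T : 'I_n -> 'I_n -> 'I_n -> K) : Prop :=
  forall i j k, T i j k = 0.

End Defs.

From HB Require Import structures.
From mathcomp Require Import all_boot all_order all_algebra ring.
Import GRing.Theory.
Local Open Scope ring_scope.

(* Pair both sides of each identity with a third covector chi.
   Expanding T_s zeta = sum_i <zeta, a_i> b_i and the transposes L^*, R^*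
   turns <chi, lhs - rhs> into a double sum over the terms of s, which is the
   full contraction of the 3-tensor P_k(s) with chi (x) zeta (x) eta (or with
   zeta (x) eta (x) chi).  As the pairing is nondegenerate, the identity holds
   for all zeta, eta iff this trilinear form vanishes, i.e. iff P_k(s) = 0. *)

Section RowDuality.
Context {K : fieldType} {n : nat}.
Local Notation A := 'rV[K]_n.
Implicit Types (x y z u v : A) (r s : seq (A * A)).

Lemma pairC x y : pair x y = pair y x.
Proof. by apply: eq_bigr => i _; rewrite mulrC. Qed.

Lemma pairDr z x y : pair z (x + y) = pair z x + pair z y.
Proof. by rewrite /pair -big_split; apply: eq_bigr => i _; rewrite mxE mulrDr. Qed.

Lemma pairZr z a x : pair z (a *: x) = a * pair z x.
Proof. by rewrite /pair mulr_sumr; apply: eq_bigr => i _; rewrite mxE mulrCA. Qed.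

Lemma pairNr z x : pair z (- x) = - pair z x.
Proof. by rewrite -scaleN1r pairZr mulN1r. Qed.

Lemma pairBr z x y : pair z (x - y) = pair z x - pair z y.
Proof. by rewrite pairDr pairNr. Qed.

Lemma pairDl z x y : pair (x + y) z = pair x z + pair y z.
Proof. by rewrite ![pair _ z]pairC pairDr. Qed.

Lemma pairNl z x : pair (- x) z = - pair x z.
Proof. by rewrite ![pair _ z]pairC pairNr. Qed.

Lemma pair_sumr (I : Type) (r : seq I) (P : pred I) (F : I -> A) z :
  pair z (\sum_(i <- r | P i) F i) = \sum_(i <- r | P i) pair z (F i).
Proof.
rewrite /pair [RHS]exchange_big; apply: eq_bigr => j _.
by rewrite summxE mulr_sumr.
Qed.

Lemma sum_delta_mx (G : 'I_n -> K) i :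
  \sum_(j < n) (delta_mx 0 i : A) 0 j * G j = G i.
Proof.
rewrite (bigD1 i) //= big1 ?addr0 => [|j ji]; first by rewrite mxE !eqxx mul1r.
by rewrite mxE (negbTE ji) andbF mul0r.
Qed.

Lemma pair_delta i x : pair (delta_mx 0 i) x = x 0 i.
Proof. exact: sum_delta_mx. Qed.

Lemma pair_nondegenerate u : (forall z, pair z u = 0) -> u = 0.
Proof. by move=> u0; apply/rowP => i; rewrite -pair_delta u0 mxE. Qed.

Lemma pair_transpose (g : {linear A -> A}) zeta y :
  pair (\row_j - pair zeta (g (delta_mx 0 j))) y = - pair zeta (g y).
Proof.
rewrite {2}(row_sum_delta y) linear_sum pair_sumr -sumrN.
by apply: eq_bigr => j _; rewrite linearZ pairZr /= mxE mulNr mulrC.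
Qed.

Lemma bilinear_op_for {op : A -> A -> A} :
  bilinear_op op -> bilinear_for *:%R *:%R op.
Proof. by case=> opl opr; split=> [y a u v | x a u v] /=; rewrite ?opl ?opr. Qed.

Lemma TmapD r x y : Tmap r (x + y) = Tmap r x + Tmap r y.
Proof. by rewrite /Tmap -big_split; apply: eq_bigr => p _; rewrite pairDl scalerDl. Qed.

Lemma TmapN r x : Tmap r (- x) = - Tmap r x.
Proof. by rewrite /Tmap -sumrN; apply: eq_bigr => p _; rewrite pairNl scaleNr. Qed.

Lemma starC (f g : A -> A -> A) x y : star f g x y = star f g y x.
Proof. exact: addrC. Qed.

Section Combinations.
Variables f g : {bilinear A -> A -> A}.

Lemma circ_is_bilinear : bilinear_for *:%R *:%R (circ f g).
Proof.
by split=> [y a u v | x a u v];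
  rewrite /circ /= ?(linearDl, linearZl, linearDr, linearZr) /= scalerDr addrACA.
Qed.
HB.instance Definition _ :=
  bilinear_isBilinear.Build K A A A *:%R *:%R (circ f g) circ_is_bilinear.

Lemma odot_is_bilinear : bilinear_for *:%R *:%R (odot f g).
Proof.
by split=> [y a u v | x a u v];
  rewrite /odot /= ?(linearDl, linearZl, linearDr, linearZr) /= scalerDr addrACA.
Qed.
HB.instance Definition _ :=
  bilinear_isBilinear.Build K A A A *:%R *:%R (odot f g) odot_is_bilinear.

Lemma star_is_bilinear : bilinear_for *:%R *:%R (star f g).
Proof.
by split=> [y a u v | x a u v]; rewrite /star /= !(linearDl (circ f g),
  linearZl_LR (circ f g), linearDr (circ f g), linearZr_LR (circ f g)) scalerDr addrACA.
Qed.
HB.instance Definition _ :=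
  bilinear_isBilinear.Build K A A A *:%R *:%R (star f g) star_is_bilinear.

End Combinations.

Lemma pair_dualopL (f : {bilinear A -> A -> A}) x zeta y :
  pair (dualop (Lop f) x zeta) y = - pair zeta (f x y).
Proof. by rewrite -(pair_transpose (f x)); congr pair; apply/rowP => j; rewrite !mxE. Qed.

Lemma pair_dualopR (f : {bilinear A -> A -> A}) x zeta y :
  pair (dualop (Rop f) x zeta) y = - pair zeta (f y x).
Proof.
by rewrite -(pair_transpose (applyr f x)); congr pair; apply/rowP => j; rewrite !mxE.
Qed.

Definition pair3 (T : 'I_n -> 'I_n -> 'I_n -> K) x y z : K :=
  \sum_(i < n) x 0 i * \sum_(j < n) y 0 j * \sum_(k < n) z 0 k * T i j k.

Lemma pair3_delta T i j k :
  pair3 T (delta_mx 0 i) (delta_mx 0 j) (delta_mx 0 k) = T i j k.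
Proof. by rewrite /pair3 !sum_delta_mx. Qed.

Lemma tensor_zeroP T : tensor_zero T <-> forall x y z, pair3 T x y z = 0.
Proof.
split=> [T0 x y z | T0 i j k]; last by rewrite -pair3_delta T0.
rewrite /pair3 big1 // => i _; rewrite big1 ?mulr0 // => j _.
by rewrite big1 ?mulr0 // => k _; rewrite T0 mulr0.
Qed.

Lemma pair3D T1 T2 x y z :
  pair3 (fun i j k => T1 i j k + T2 i j k) x y z = pair3 T1 x y z + pair3 T2 x y z.
Proof.
rewrite /pair3 -big_split; apply: eq_bigr => i _ /=; rewrite -mulrDr -big_split.
apply: congr1; apply: eq_bigr => j _ /=; rewrite -mulrDr -big_split.
by apply: congr1; apply: eq_bigr => k _ /=; rewrite -mulrDr.
Qed.

Lemma pair3N T x y z : pair3 (fun i j k => - T i j k) x y z = - pair3 T x y z.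
Proof.
rewrite /pair3 -sumrN; apply: eq_bigr => i _ /=; rewrite -mulrN -sumrN.
apply: congr1; apply: eq_bigr => j _ /=; rewrite -mulrN -sumrN.
by apply: congr1; apply: eq_bigr => k _ /=; rewrite -mulrN.
Qed.

Lemma eq_pair3 T1 T2 x y z : (forall i j k, T1 i j k = T2 i j k) ->
  pair3 T1 x y z = pair3 T2 x y z.
Proof.
move=> eT; rewrite /pair3.
by under eq_bigr => i _ do under eq_bigr => j _ do under eq_bigr => k _ do rewrite eT.
Qed.

Lemma pair3_sum (I : Type) (r : seq I) (G : I -> 'I_n -> 'I_n -> 'I_n -> K) x y z :
  pair3 (fun i j k => \sum_(p <- r) G p i j k) x y z = \sum_(p <- r) pair3 (G p) x y z.
Proof.
elim: r => [|p r IHr].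
  rewrite big_nil /pair3 big1 // => i _; rewrite big1 ?mulr0 // => j _.
  by rewrite big1 ?mulr0 // => k _; rewrite big_nil mulr0.
by rewrite big_cons -IHr -pair3D; apply: eq_pair3 => i j k; rewrite big_cons.
Qed.

Lemma pair3_t3 a b c x y z : pair3 (t3 a b c) x y z = pair x a * pair y b * pair z c.
Proof.
rewrite /pair3 -mulrA mulr_suml; apply: eq_bigr => i _.
rewrite mulr_suml !mulr_sumr; apply: eq_bigr => j _.
by rewrite !mulr_sumr; apply: eq_bigr => k _; rewrite /t3; ring.
Qed.

Lemma pair3_sum2_t3 (I J : Type) (r : seq I) (r' : seq J) (a b c : I -> J -> A) x y z :
  pair3 (fun i j k => \sum_(p <- r) \sum_(q <- r') t3 (a p q) (b p q) (c p q) i j k) x y z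
  = \sum_(p <- r) \sum_(q <- r') pair x (a p q) * pair y (b p q) * pair z (c p q).
Proof.
rewrite pair3_sum; apply: eq_bigr => p _.
by rewrite pair3_sum; apply: eq_bigr => q _; apply: pair3_t3.
Qed.

Lemma sum_tau s (F : A * A -> K) : \sum_(p <- tau s) F p = \sum_(p <- s) F (p.2, p.1).
Proof. exact: big_map. Qed.

Lemma sum_sum_tau r s (F : A * A -> A * A -> K) :
  \sum_(p <- r) \sum_(q <- tau s) F p q = \sum_(p <- r) \sum_(q <- s) F p (q.2, q.1).
Proof. by apply: eq_bigr => p _; apply: sum_tau. Qed.

Lemma pair_Tmap r zeta chi :
  pair chi (Tmap r zeta) = \sum_(p <- r) pair zeta p.1 * pair chi p.2.
Proof. by rewrite pair_sumr; apply: eq_bigr => p _; rewrite pairZr. Qed.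

Section BilinearExpansion.
Variable f : {bilinear A -> A -> A}.

Lemma pair_bilinear_Tmap r r' a b chi :
  pair chi (f (Tmap r a) (Tmap r' b))
  = \sum_(p <- r) \sum_(q <- r') pair a p.1 * pair b q.1 * pair chi (f p.2 q.2).
Proof.
rewrite linear_sumlz pair_sumr; apply: eq_bigr => p _.
rewrite linearZl_LR pairZr linear_sumr pair_sumr mulr_sumr; apply: eq_bigr => q _.
by rewrite linearZr_LR pairZr; ring.
Qed.

(* In these expansions the sums are ordered like the arguments of [f]. *)
Lemma pair_Tmap_dualopL r r' a b chi :
  pair chi (Tmap r (dualop (Lop f) (Tmap r' a) b))
  = - \sum_(p <- r') \sum_(q <- r) pair a p.1 * pair chi q.2 * pair b (f p.2 q.1).
Proof.
rewrite pair_Tmap exchange_big -sumrN; apply: eq_bigr => q _.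
rewrite pair_dualopL linear_sumlz pair_sumr mulNr mulr_suml; congr (- _).
by apply: eq_bigr => p _; rewrite linearZl_LR pairZr; ring.
Qed.

Lemma pair_Tmap_dualopR r r' a b chi :
  pair chi (Tmap r (dualop (Rop f) (Tmap r' a) b))
  = - \sum_(p <- r) \sum_(q <- r') pair a q.1 * pair chi p.2 * pair b (f p.1 q.2).
Proof.
rewrite pair_Tmap -sumrN; apply: eq_bigr => p _.
rewrite pair_dualopR linear_sumr pair_sumr mulNr mulr_suml; congr (- _); apply: eq_bigr => q _.
by rewrite linearZr_LR pairZr; ring.
Qed.
End BilinearExpansion.

Lemma tensor_zero_iff_first {T} {f g : A -> A -> A} :
  (forall x y z, pair x (f y z - g y z) = pair3 T x y z) ->
  tensor_zero T <-> forall y z, f y z = g y z.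
Proof.
move=> fgT; rewrite tensor_zeroP; split=> [T0 y z | fg x y z].
  by apply/eqP; rewrite -subr_eq0; apply/eqP/pair_nondegenerate => x; rewrite fgT.
by rewrite -fgT fg pairBr subrr.
Qed.

Lemma tensor_zero_iff_last {T} {f g : A -> A -> A} :
  (forall x y z, pair z (f x y - g x y) = pair3 T x y z) ->
  tensor_zero T <-> forall x y, f x y = g x y.
Proof.
move=> fgT; rewrite tensor_zeroP; split=> [T0 x y | fg x y z].
  by apply/eqP; rewrite -subr_eq0; apply/eqP/pair_nondegenerate => z; rewrite fgT.
by rewrite -fgT fg pairBr subrr.
Qed.

Ltac sum2_ring :=
  apply/eqP; rewrite -subr_eq0; apply/eqP;
  rewrite -?(sumrN, sumrB, big_split) /=; apply: big1 => p _;
  rewrite -?(sumrN, sumrB, big_split) /=; apply: big1 => q _; ring.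

Section AntiPreNovikovDuality.
Variables (N : antiPreNovikov K n) (s : seq (A * A)).

HB.instance Definition _ :=
  bilinear_isBilinear.Build K A A A *:%R *:%R (sc N) (bilinear_op_for (sc_bilin N)).
HB.instance Definition _ :=
  bilinear_isBilinear.Build K A A A *:%R *:%R (pc N) (bilinear_op_for (pc_bilin N)).
Local Notation sc := (sc N).
Local Notation pc := (pc N).
Local Notation ci := (circ sc pc).
Local Notation od := (odot sc pc).
Local Notation st := (star sc pc).
Local Notation Ts := (Tmap s).
Local Notation Tt := (Tmap (tau s)).

Ltac expand_tensor :=
  rewrite /P0 /P1 /P2 /P3 /P4 /P5 ?pair3D ?pair3N;
  rewrite /s12_s13 /s13_s12 /s12_s23 /s13_s23 /s23_s13 /s23_s12 !pair3_sum2_t3;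
  rewrite ?sum_tau ?sum_sum_tau /=.

Lemma P0_pair chi zeta eta :
  pair chi (ci (Tt zeta) (Tt eta)
            - Tt (dualop (Lop od) (Ts zeta) eta + dualop (Rop pc) (Tt eta) zeta))
  = pair3 (P0 N s) chi zeta eta.
Proof.
rewrite pairBr (pair_bilinear_Tmap ci) TmapD pairDr.
rewrite (pair_Tmap_dualopL od) (pair_Tmap_dualopR pc).
by expand_tensor; sum2_ring.
Qed.

Lemma P1_pair chi zeta eta :
  pair chi (pc (Tt zeta) (Tt eta)
            - Tt (dualop (Rop ci) (Tt eta) zeta - dualop (Rop od) (Ts zeta) eta))
  = pair3 (P1 N s) chi zeta eta.
Proof.
rewrite pairBr (pair_bilinear_Tmap pc) TmapD TmapN pairDr pairNr.
rewrite (pair_Tmap_dualopR ci) (pair_Tmap_dualopR od).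
by expand_tensor; sum2_ring.
Qed.

Lemma P2_pair chi zeta eta :
  pair chi (sc (Tt zeta) (Tt eta)
            - Tt (dualop (Lop st) (Ts zeta) eta - dualop (Rop sc) (Tt eta) zeta))
  = pair3 (P2 N s) chi zeta eta.
Proof.
rewrite pairBr (pair_bilinear_Tmap sc) TmapD TmapN pairDr pairNr.
rewrite (pair_Tmap_dualopL st) (pair_Tmap_dualopR sc).
expand_tensor.
(* the s13 * s23 term is symmetric in its first two legs since star is commutative *)
have swap : \sum_(p <- s) \sum_(q <- s) pair chi p.1 * pair zeta q.1 * pair eta (st p.2 q.2)
          = \sum_(p <- s) \sum_(q <- s) pair zeta p.1 * pair chi q.1 * pair eta (st p.2 q.2).
  rewrite exchange_big; apply: eq_bigr => p _; apply: eq_bigr => q _.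
  by rewrite starC; ring.
by rewrite swap; sum2_ring.
Qed.

Lemma P3_pair zeta eta chi :
  pair chi (ci (Ts zeta) (Ts eta)
            - Ts (- dualop (Lop od) (Ts zeta) eta - dualop (Rop pc) (Tt eta) zeta))
  = pair3 (P3 N s) zeta eta chi.
Proof.
rewrite pairBr (pair_bilinear_Tmap ci) TmapD !TmapN pairDr !pairNr.
rewrite (pair_Tmap_dualopL od) (pair_Tmap_dualopR pc).
by expand_tensor; sum2_ring.
Qed.

(* For P4 and P5 the difference is taken the other way round, absorbing the sign. *)
Lemma P4_pair zeta eta chi :
  pair chi (Ts (dualop (Rop od) (Ts zeta) eta - dualop (Rop ci) (Tt eta) zeta)
            - pc (Ts zeta) (Ts eta))
  = pair3 (P4 N s) zeta eta chi.
Proof.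
rewrite pairBr (pair_bilinear_Tmap pc) TmapD TmapN pairDr pairNr.
rewrite (pair_Tmap_dualopR od) (pair_Tmap_dualopR ci).
by expand_tensor; sum2_ring.
Qed.

Lemma P5_pair zeta eta chi :
  pair chi (Ts (dualop (Rop sc) (Tt eta) zeta - dualop (Lop st) (Ts zeta) eta)
            - sc (Ts zeta) (Ts eta))
  = pair3 (P5 N s) zeta eta chi.
Proof.
rewrite pairBr (pair_bilinear_Tmap sc) TmapD TmapN pairDr pairNr.
rewrite (pair_Tmap_dualopR sc) (pair_Tmap_dualopL st).
by expand_tensor; sum2_ring.
Qed.

End AntiPreNovikovDuality.
End RowDuality.

Theorem mainTheorem6 (K : fieldType) (n : nat) (N : antiPreNovikov K n)
    (s : seq ('rV[K]_n * 'rV[K]_n)) :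
  let sc := sc N in let pc := pc N in
  let ci := circ sc pc in let od := odot sc pc in let st := star sc pc in
  let Ts := Tmap s in let Tt := Tmap (tau s) in
  (* (a) *)
  (tensor_zero (P0 N s) <->
     forall zeta eta : 'rV[K]_n,
       ci (Tt zeta) (Tt eta)
       = Tt (dualop (Lop od) (Ts zeta) eta + dualop (Rop pc) (Tt eta) zeta)) /\
  (* (b) *)
  (tensor_zero (P1 N s) <->
     forall zeta eta : 'rV[K]_n,
       pc (Tt zeta) (Tt eta)
       = Tt (dualop (Rop ci) (Tt eta) zeta - dualop (Rop od) (Ts zeta) eta)) /\
  (* (c) *)
  (tensor_zero (P2 N s) <->
     forall zeta eta : 'rV[K]_n,
       sc (Tt zeta) (Tt eta)
       = Tt (dualop (Lop st) (Ts zeta) eta - dualop (Rop sc) (Tt eta) zeta)) /\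
  (* (d) *)
  (tensor_zero (P3 N s) <->
     forall zeta eta : 'rV[K]_n,
       ci (Ts zeta) (Ts eta)
       = Ts (- dualop (Lop od) (Ts zeta) eta - dualop (Rop pc) (Tt eta) zeta)) /\
  (* (e) *)
  (tensor_zero (P4 N s) <->
     forall zeta eta : 'rV[K]_n,
       pc (Ts zeta) (Ts eta)
       = Ts (dualop (Rop od) (Ts zeta) eta - dualop (Rop ci) (Tt eta) zeta)) /\
  (* (f) *)
  (tensor_zero (P5 N s) <->
     forall zeta eta : 'rV[K]_n,
       sc (Ts zeta) (Ts eta)
       = Ts (dualop (Rop sc) (Tt eta) zeta - dualop (Lop st) (Ts zeta) eta)).
Proof.
cbv zeta; split; [|split; [|split; [|split; [|split]]]].
- exact: tensor_zero_iff_first (P0_pair N s).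
- exact: tensor_zero_iff_first (P1_pair N s).
- exact: tensor_zero_iff_first (P2_pair N s).
- exact: tensor_zero_iff_last (P3_pair N s).
- rewrite (tensor_zero_iff_last (P4_pair N s)).
  by split=> fg x y; rewrite fg.
- rewrite (tensor_zero_iff_last (P5_pair N s)).
  by split=> fg x y; rewrite fg.
Qed.
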